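(* Suppose $\mathit{Act}=\{a\}$. Then the finite axiom system $\mathcal{E}_{v,1}'=\mathcal{E}_v'\cup\{V_1\}$, where ($V_1$) is $x=x+a.x$, is complete for $\simeq$ over open monitors: for all monitors $m,n$, if $m\simeq n$ then $\mathcal{E}_{v,1}'\vdash m=n$. Hence verdict equivalence has a finite equational basis when $\mathit{Act}=\{a\}$.
   Context: Monitors: terms $m,n ::= v \mid a.m \mid m+n \mid x$ over the action set $\mathit{Act}$ and variables $x$, verdicts $v::=\mathit{end}\mid\mathit{yes}\mid\mathit{no}$. Semantics: $\xrightarrow{\alpha}$ ($\alpha\in\mathit{Act}\cup\{\tau\}$) is the least relation with $a.m\xrightarrow{a}m$; $m\xrightarrow{\alpha}m'$ implies $m+n\xrightarrow{\alpha}m'$ and $n+m\xrightarrow{\alpha}m'$; $v\xrightarrow{\alpha}v$ for verdicts $v$. Weak transitions: $m\xRightarrow{\varepsilon}m'$ iff $m(\xrightarrow{\tau})^*m'$; $m\xRightarrow{a}m'$ iff $m\xRightarrow{\varepsilon}\xrightarrow{a}\xRightarrow{\varepsilon}m'$; $m\xRightarrow{as'}m'$ ($s'\ne\varepsilon$) iff $m\xRightarrow{a}m_1\xRightarrow{s'}m'$. For closed $m$, $L_a(m)=\{s\mid m\xRightarrow{s}\mathit{yes}\}$, $L_r(m)=\{s\mid m\xRightarrow{s}\mathit{no}\}$; $m\simeq n$ iff $L_a,L_r$ coincide for closed terms, and iff $\sigma(m)\simeq\sigma(n)$ for all closed substitutions $\sigma$ for open terms. $\mathcal{E}\vdash m=n$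 denotes derivability by reflexivity, symmetry, transitivity, substitution and congruence for $a.\_$ and $+$. $\mathcal{E}_v'$ consists of (A1) $x+y=y+x$; (A2) $x+(y+z)=(x+y)+z$; (A3) $x+x=x$; (A4) $x+\mathit{end}=x$; for each $a\in\mathit{Act}$: ($E_a$) $a.\mathit{end}=\mathit{end}$; ($Y_a$) $\mathit{yes}=\mathit{yes}+a.\mathit{yes}$; ($N_a$) $\mathit{no}=\mathit{no}+a.\mathit{no}$; ($D_a$) $a.(x+y)=a.x+a.y$; and (O1) $\mathit{yes}+\mathit{no}=\mathit{yes}+\mathit{no}+x$. *)

From Stdlib Require Import List.
Import ListNotations.
Set Implicit Arguments.

Inductive verdict : Type := vend | vyes | vno.

Inductive mon (A : Type) : Type :=
| Verd : verdict -> mon A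
| Pre : A -> mon A -> mon A
| Sum : mon A -> mon A -> mon A
| Var : nat -> mon A.
Arguments Verd {A}.
Arguments Var {A}.

Fixpoint closed {A} (m : mon A) : Prop :=
  match m with
  | Verd _ => True
  | Pre _ m => closed m
  | Sum m n => closed m /\ closed n
  | Var _ => False
  end.

Fixpoint subst {A} (s : nat -> mon A) (m : mon A) : mon A :=
  match m with
  | Verd v => Verd v
  | Pre a m => Pre a (subst s m)
  | Sum m n => Sum (subst s m) (subst s n)
  | Var x => s x
  end.

(* labelled transitions; None is tau *)
Inductive step {A} : mon A -> option A -> mon A -> Prop :=
| st_pre : forall a m, step (Pre a m) (Some a) m
| st_sumL : forall m n al m', step m al m' -> step (Sum m n) al m'
| st_sumR : forall m n al m', step m al m' -> step (Sum n m) al m'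
| st_verd : forall v al, step (Verd v) al (Verd v).

Inductive tau_star {A} : mon A -> mon A -> Prop :=
| ts_refl : forall m, tau_star m m
| ts_step : forall m m1 m2, step m None m1 -> tau_star m1 m2 -> tau_star m m2.

Fixpoint weak {A} (m : mon A) (s : list A) (m' : mon A) : Prop :=
  match s with
  | [] => tau_star m m'
  | a :: s' => exists m1 m2 m3, tau_star m m1 /\ step m1 (Some a) m2 /\
                 tau_star m2 m3 /\ weak m3 s' m'
  end.

Definition acc {A} (m : mon A) (s : list A) : Prop := weak m s (Verd vyes).
Definition rej {A} (m : mon A) (s : list A) : Prop := weak m s (Verd vno).

Definition veq_closed {A} (m n : mon A) : Prop :=
  forall s, (acc m s <-> acc n s) /\ (rej m s <-> rej n s).

Definition veq {A} (m n : mon A) : Prop :=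
  forall sg : nat -> mon A, (forall x, closed (sg x)) ->
    veq_closed (subst sg m) (subst sg n).

Inductive derivable {A} (E : mon A -> mon A -> Prop) : mon A -> mon A -> Prop :=
| d_ax : forall l r, E l r -> derivable E l r
| d_refl : forall m, derivable E m m
| d_sym : forall m n, derivable E m n -> derivable E n m
| d_trans : forall m n p, derivable E m n -> derivable E n p -> derivable E m p
| d_subst : forall sg m n, derivable E m n -> derivable E (subst sg m) (subst sg n)
| d_pre : forall a m n, derivable E m n -> derivable E (Pre a m) (Pre a n)
| d_sum : forall m m' n n', derivable E m m' -> derivable E n n' ->
    derivable E (Sum m n) (Sum m' n').

Definition vx {A} : mon A := Var 0.
Definition vy {A} : mon A := Var 1.
Definition vz {A} : mon A := Var 2.

Inductive Ev' {A} : mon A -> mon A -> Prop :=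
| A1 : Ev' (Sum vx vy) (Sum vy vx)
| A2 : Ev' (Sum vx (Sum vy vz)) (Sum (Sum vx vy) vz)
| A3 : Ev' (Sum vx vx) vx
| A4 : Ev' (Sum vx (Verd vend)) vx
| Ea : forall a, Ev' (Pre a (Verd vend)) (Verd vend)
| Ya : forall a, Ev' (Verd vyes) (Sum (Verd vyes) (Pre a (Verd vyes)))
| Na : forall a, Ev' (Verd vno) (Sum (Verd vno) (Pre a (Verd vno)))
| Da : forall a, Ev' (Pre a (Sum vx vy)) (Sum (Pre a vx) (Pre a vy))
| O1 : Ev' (Sum (Verd vyes) (Verd vno)) (Sum (Sum (Verd vyes) (Verd vno)) vx).

Inductive Ev1' {A} (a : A) : mon A -> mon A -> Prop :=
| E_old : forall l r, Ev' l r -> Ev1' a l r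
| V1 : Ev1' a vx (Sum vx (Pre a vx)).

From Stdlib Require Import List Lia Arith.
Import ListNotations.

(* Write M >= t ("M absorbs t") for the derivable equation M + t = M.  Absorption
   is a preorder compatible with + and prefixing, and mutual absorption gives
   derivable equality, so it suffices to show that m absorbs n whenever m ~ n.

   Since every action equals a, axiom (D_a) flattens every monitor into a sum of
   "summands" a^k.l with l a verdict or a variable (the list [summands]).  A
   summand a^j.t with t >= a.t (true for yes, no by (Y_a), (N_a), and for
   variables by (V_1)) absorbs every deeper a^k.t, and a^k.yes + a^k.no absorbs
   every a^k.t by (O1).  Semantically, a verdict reached after a^k is exactly a
   summand of depth at most k.  Instantiating variables by verdicts then shows
   that every summand a^k.l of n is matched in m by a summand a^j.l (j <= k),
   or, when l is a variable, by a yes- and a no-summand of depth at most k. *)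

Section Completeness.

Variable A : Type.
Variable a : A.

Local Notation "p =E q" := (derivable (Ev1' a) p q) (at level 70).

Definition inst3 (p q r : mon A) : nat -> mon A :=
  fun n => match n with 0 => p | 1 => q | _ => r end.

Lemma axiom_inst {l r} p q s :
  Ev1' a l r -> subst (inst3 p q s) l =E subst (inst3 p q s) r.
Proof. intro H. apply d_subst, d_ax, H. Qed.

Ltac use_axiom H p q s :=
  let K := fresh in
  pose proof (axiom_inst p q s H) as K; cbv [subst inst3 vx vy vz] in K; exact K.

Lemma sum_comm p q : Sum p q =E Sum q p.
Proof. use_axiom (E_old a A1) p q p. Qed.

Lemma sum_assoc p q r : Sum p (Sum q r) =E Sum (Sum p q) r.
Proof. use_axiom (E_old a A2) p q r. Qed.

Lemma sum_idem p : Sum p p =E p.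
Proof. use_axiom (E_old a A3) p p p. Qed.

Lemma sum_end p : Sum p (Verd vend) =E p.
Proof. use_axiom (E_old a A4) p p p. Qed.

Lemma pre_end b : Pre b (Verd vend) =E Verd vend.
Proof. apply d_ax, E_old, Ea. Qed.

Lemma pre_distr b p q : Pre b (Sum p q) =E Sum (Pre b p) (Pre b q).
Proof. use_axiom (E_old a (Da b)) p q p. Qed.

Lemma yes_unfold : Sum (Verd vyes) (Pre a (Verd vyes)) =E Verd vyes.
Proof. apply d_sym, d_ax, E_old, Ya. Qed.

Lemma no_unfold : Sum (Verd vno) (Pre a (Verd vno)) =E Verd vno.
Proof. apply d_sym, d_ax, E_old, Na. Qed.

Lemma yes_no_top p : Sum (Sum (Verd vyes) (Verd vno)) p =E Sum (Verd vyes) (Verd vno).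
Proof. apply d_sym. use_axiom (E_old a O1) p p p. Qed.

Lemma var_unfold p : Sum p (Pre a p) =E p.
Proof. apply d_sym. use_axiom (V1 a) p p p. Qed.

Definition absorbs (M t : mon A) : Prop := Sum M t =E M.

Lemma absorbs_antisym m n : absorbs m n -> absorbs n m -> m =E n.
Proof.
  unfold absorbs; intros Hmn Hnm.
  eapply d_trans; [apply d_sym, Hmn|].
  eapply d_trans; [apply sum_comm|exact Hnm].
Qed.

Lemma absorbs_refl M : absorbs M M.
Proof. apply sum_idem. Qed.

Lemma absorbs_trans M p q : absorbs M p -> absorbs p q -> absorbs M q.
Proof.
  unfold absorbs; intros HMp Hpq.
  eapply d_trans; [apply d_sum; [apply d_sym, HMp|apply d_refl]|].
  eapply d_trans; [apply d_sym, sum_assoc|].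
  eapply d_trans; [apply d_sum; [apply d_refl|exact Hpq]|exact HMp].
Qed.

Lemma absorbs_sum M p q : absorbs M p -> absorbs M q -> absorbs M (Sum p q).
Proof.
  unfold absorbs; intros Hp Hq.
  eapply d_trans; [apply sum_assoc|].
  eapply d_trans; [apply d_sum; [exact Hp|apply d_refl]|exact Hq].
Qed.

Lemma absorbs_eq_l M M' t : M =E M' -> absorbs M t -> absorbs M' t.
Proof.
  unfold absorbs; intros HM Ht.
  eapply d_trans; [apply d_sum; [apply d_sym, HM|apply d_refl]|].
  eapply d_trans; [exact Ht|exact HM].
Qed.

Lemma absorbs_eq_r M t t' : t =E t' -> absorbs M t -> absorbs M t'.
Proof.
  unfold absorbs; intros Ht H.
  eapply d_trans; [apply d_sum; [apply d_refl|apply d_sym, Ht]|exact H].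
Qed.

Lemma absorbs_sum_l M N t : absorbs M t -> absorbs (Sum M N) t.
Proof.
  unfold absorbs; intros H.
  eapply d_trans; [apply d_sym, sum_assoc|].
  eapply d_trans; [apply d_sum; [apply d_refl|apply sum_comm]|].
  eapply d_trans; [apply sum_assoc|apply d_sum; [exact H|apply d_refl]].
Qed.

Lemma absorbs_sum_r M N t : absorbs N t -> absorbs (Sum M N) t.
Proof. intros H. eapply absorbs_eq_l; [apply sum_comm|apply absorbs_sum_l, H]. Qed.

Lemma absorbs_end M : absorbs M (Verd vend).
Proof. apply sum_end. Qed.

Lemma absorbs_pre b p q : absorbs p q -> absorbs (Pre b p) (Pre b q).
Proof. unfold absorbs; intros H. eapply d_trans; [apply d_sym, pre_distr|apply d_pre, H]. Qed.

Fixpoint apow (d : nat) (t : mon A) : mon A :=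
  match d with 0 => t | S d => apow d (Pre a t) end.

Lemma apow_add j i t : apow (j + i) t = apow i (apow j t).
Proof. revert t; induction j; simpl; auto. Qed.

Lemma apow_cong d p q : p =E q -> apow d p =E apow d q.
Proof. revert p q; induction d; simpl; auto using d_pre. Qed.

Lemma apow_sum d p q : apow d (Sum p q) =E Sum (apow d p) (apow d q).
Proof.
  revert p q; induction d; simpl; intros p q; [apply d_refl|].
  eapply d_trans; [apply apow_cong, pre_distr|apply IHd].
Qed.

Lemma apow_end d : apow d (Verd vend) =E Verd vend.
Proof.
  induction d; simpl; [apply d_refl|].
  eapply d_trans; [apply apow_cong, pre_end|exact IHd].
Qed.

Lemma absorbs_apow d p q : absorbs p q -> absorbs (apow d p) (apow d q).
Proof. revert p q; induction d; simpl; auto using absorbs_pre. Qed.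

Definition saturated (t : mon A) : Prop := absorbs t (Pre a t).

Lemma saturated_yes : saturated (Verd vyes).
Proof. apply yes_unfold. Qed.

Lemma saturated_no : saturated (Verd vno).
Proof. apply no_unfold. Qed.

Lemma saturated_all t : saturated t.
Proof. apply var_unfold. Qed.

Lemma absorbs_deeper t j k : saturated t -> j <= k -> absorbs (apow j t) (apow k t).
Proof.
  intros Hsat Hjk. replace k with (j + (k - j)) by lia.
  rewrite Nat.add_comm, !apow_add. apply absorbs_apow.
  induction (k - j) as [|i IH]; simpl; [apply absorbs_refl|].
  eapply absorbs_trans; [exact IH|apply absorbs_apow, Hsat].
Qed.

Lemma absorbs_yes_no M j1 j2 k t : j1 <= k -> j2 <= k ->
  absorbs M (apow j1 (Verd vyes)) -> absorbs M (apow j2 (Verd vno)) ->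
  absorbs M (apow k t).
Proof.
  intros Hj1 Hj2 Hyes Hno.
  assert (Hboth : absorbs M (apow k (Sum (Verd vyes) (Verd vno)))).
  { eapply absorbs_eq_r; [apply d_sym, apow_sum|apply absorbs_sum].
    - eapply absorbs_trans; [exact Hyes|apply absorbs_deeper; auto using saturated_yes].
    - eapply absorbs_trans; [exact Hno|apply absorbs_deeper; auto using saturated_no]. }
  eapply absorbs_trans; [exact Hboth|apply absorbs_apow, yes_no_top].
Qed.

(* The summands of a monitor: pairs (k, l) with l a verdict or variable, such
   that the monitor is, up to E, the sum of the a^k.l. *)

Fixpoint summands (m : mon A) : list (nat * mon A) :=
  match m with
  | Verd v => [(0, Verd v)]
  | Var x => [(0, Var x)]
  | Sum p q => summands p ++ summands q
  | Pre _ p => map (fun t => (S (fst t), snd t)) (summands p)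
  end.

Lemma summand_leaf m j l :
  In (j, l) (summands m) -> (exists v, l = Verd v) \/ (exists y, l = Var y).
Proof.
  revert j; induction m; simpl; intros j H.
  - destruct H as [H|[]]; inversion H; eauto.
  - apply in_map_iff in H. destruct H as [[k l'] [E Hin]]. inversion E; subst. eauto.
  - apply in_app_or in H; destruct H; eauto.
  - destruct H as [H|[]]; inversion H; eauto.
Qed.

Section OneLetter.

Hypothesis single : forall b : A, b = a.

(* Each summand a^k.l of m is absorbed by m (stated under a^d for the induction). *)
Lemma absorbs_own_summand_under m d k l :
  In (k, l) (summands m) -> absorbs (apow d m) (apow (d + k) l).
Proof.
  revert d k l; induction m; simpl; intros d k l H.
  - destruct H as [H|[]]. inversion H; subst. rewrite Nat.add_0_r. apply absorbs_refl.
  - rewrite (single a0). change (apow d (Pre a m)) with (apow (S d) m).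
    apply in_map_iff in H. destruct H as [[k' l'] [E Hin]]. inversion E; subst.
    replace (d + S k') with (S d + k') by lia. apply IHm, Hin.
  - eapply absorbs_eq_l; [apply d_sym, apow_sum|].
    apply in_app_or in H. destruct H; [apply absorbs_sum_l, IHm1|apply absorbs_sum_r, IHm2]; auto.
  - destruct H as [H|[]]. inversion H; subst. rewrite Nat.add_0_r. apply absorbs_refl.
Qed.

Lemma absorbs_own_summand m k l : In (k, l) (summands m) -> absorbs m (apow k l).
Proof. apply (absorbs_own_summand_under m 0). Qed.

Lemma absorbs_by_summands_under n d M :
  (forall k l, In (k, l) (summands n) -> absorbs M (apow (d + k) l)) ->
  absorbs M (apow d n).
Proof.
  revert d; induction n; simpl; intros d H.
  - rewrite <- (Nat.add_0_r d). apply H; auto.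
  - rewrite (single a0). change (apow d (Pre a n)) with (apow (S d) n).
    apply IHn. intros k l Hin. replace (S d + k) with (d + S k) by lia.
    apply H, in_map_iff. exists (k, l); auto.
  - eapply absorbs_eq_r; [apply d_sym, apow_sum|].
    apply absorbs_sum; [apply IHn1|apply IHn2]; intros; apply H, in_or_app; auto.
  - rewrite <- (Nat.add_0_r d). apply H; auto.
Qed.

Lemma absorbs_by_summands n M :
  (forall k l, In (k, l) (summands n) -> absorbs M (apow k l)) -> absorbs M n.
Proof. apply (absorbs_by_summands_under n 0). Qed.

End OneLetter.

Definition within (c c' : mon A) (d : nat) : Prop :=
  forall j l, In (j, l) (summands c') ->
    exists j', j' <= j + d /\ In (j', l) (summands c).

Lemma within_refl c : within c c 0.
Proof. intros j l H; exists j; split; auto; lia. Qed.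

Lemma within_trans c1 c2 c3 d e :
  within c1 c2 d -> within c2 c3 e -> within c1 c3 (d + e).
Proof.
  intros H12 H23 j l Hin.
  destruct (H23 j l Hin) as [j' [Hj' Hin']]. destruct (H12 j' l Hin') as [j'' [Hj'' Hin'']].
  exists j''; split; auto; lia.
Qed.

Lemma step_within c al c' : step c al c' -> within c c' 1.
Proof.
  induction 1; intros j l Hin; simpl.
  - exists (S j); split; [lia|]. apply in_map_iff. exists (j, l); auto.
  - destruct (IHstep j l Hin) as [j' [? ?]]. exists j'; split; auto. apply in_or_app; auto.
  - destruct (IHstep j l Hin) as [j' [? ?]]. exists j'; split; auto. apply in_or_app; auto.
  - exists j; split; auto; lia.
Qed.

Lemma tau_step_verdict c al c' :
  step c al c' -> al = None -> exists v, c' = Verd v /\ In (0, Verd v) (summands c).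
Proof.
  induction 1; intros E; try discriminate.
  - destruct (IHstep E) as [v [? ?]]. exists v; split; simpl; auto using in_or_app.
  - destruct (IHstep E) as [v [? ?]]. exists v; split; simpl; auto using in_or_app.
  - exists v; simpl; auto.
Qed.

Lemma tau_star_within c c' : tau_star c c' -> within c c' 0.
Proof.
  induction 1; [apply within_refl|].
  destruct (tau_step_verdict _ _ _ H eq_refl) as [v [-> Hin]].
  apply (within_trans _ (Verd v) _ 0 0); [|exact IHtau_star].
  intros j l [E|[]]. inversion E; subst. exists 0; auto.
Qed.

Lemma weak_within (s : list A) (c c' : mon A) : weak c s c' -> within c c' (length s).
Proof.
  revert c; induction s as [|b s IH]; simpl; intros c H; [apply tau_star_within, H|].
  destruct H as [m1 [m2 [m3 [H1 [H2 [H3 H4]]]]]].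
  replace (S (length s)) with (((0 + 1) + 0) + length s) by lia.
  eapply within_trans; [|apply IH, H4].
  eapply within_trans; [|apply tau_star_within, H3].
  eapply within_trans; [apply tau_star_within, H1|eapply step_within, H2].
Qed.

Lemma weak_verdict_summand (s : list A) (c : mon A) v :
  weak c s (Verd v) -> exists j, j <= length s /\ In (j, Verd v) (summands c).
Proof.
  intros H. destruct (weak_within s c _ H 0 (Verd v) (or_introl eq_refl)) as [j [? ?]].
  exists j; auto.
Qed.

Lemma weak_sum_l (s : list A) (p q : mon A) v : weak p s (Verd v) -> weak (Sum p q) s (Verd v).
Proof.
  destruct s; simpl; intros H.
  - inversion H; subst.
    + eapply ts_step; [apply st_sumL, st_verd|apply ts_refl].
    + eapply ts_step; [apply st_sumL, H0|exact H1].
  - destruct H as [m1 [m2 [m3 [H1 [H2 [H3 H4]]]]]]. inversion H1; subst.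
    + exists (Sum m1 q), m2, m3. repeat split; auto using ts_refl, st_sumL.
    + exists m1, m2, m3. repeat split; auto. eapply ts_step; [apply st_sumL, H|exact H0].
Qed.

Lemma weak_sum_r (s : list A) (p q : mon A) v : weak p s (Verd v) -> weak (Sum q p) s (Verd v).
Proof.
  destruct s; simpl; intros H.
  - inversion H; subst.
    + eapply ts_step; [apply st_sumR, st_verd|apply ts_refl].
    + eapply ts_step; [apply st_sumR, H0|exact H1].
  - destruct H as [m1 [m2 [m3 [H1 [H2 [H3 H4]]]]]]. inversion H1; subst.
    + exists (Sum q m1), m2, m3. repeat split; auto using ts_refl, st_sumR.
    + exists m1, m2, m3. repeat split; auto. eapply ts_step; [apply st_sumR, H|exact H0].
Qed.

Section Transfer.

Hypothesis single : forall b : A, b = a.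

Lemma summand_weak_verdict c k v :
  In (k, Verd v) (summands c) -> weak c (repeat a k) (Verd v).
Proof.
  revert k; induction c; simpl; intros k H.
  - destruct H as [H|[]]. inversion H; subst. apply ts_refl.
  - apply in_map_iff in H. destruct H as [[k' l'] [E Hin]]. inversion E; subst.
    exists (Pre a0 c), c, c. repeat split; auto using ts_refl.
    rewrite (single a0) at 1. apply st_pre.
  - apply in_app_or in H. destruct H; [apply weak_sum_l|apply weak_sum_r]; auto.
  - destruct H as [H|[]]. discriminate.
Qed.

Definition valuation (f : nat -> verdict) : nat -> mon A := fun x => Verd (f x).

Lemma summands_valuation f m :
  summands (subst (valuation f) m) =
  map (fun t => (fst t, subst (valuation f) (snd t))) (summands m).
Proof.
  induction m; simpl; auto.
  - rewrite IHm, !map_map. auto.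
  - rewrite IHm1, IHm2, map_app; auto.
Qed.

Lemma transfer_summand m n f k l v :
  veq m n -> In (k, l) (summands n) ->
  subst (valuation f) l = Verd v -> v = vyes \/ v = vno ->
  exists j l', j <= k /\ In (j, l') (summands m) /\ subst (valuation f) l' = Verd v.
Proof.
  intros Hveq Hin Hl Hv.
  assert (Hn : weak (subst (valuation f) n) (repeat a k) (Verd v)).
  { apply summand_weak_verdict; auto. rewrite summands_valuation.
    apply in_map_iff. exists (k, l); simpl; rewrite Hl; auto. }
  assert (Hm : weak (subst (valuation f) m) (repeat a k) (Verd v)).
  { assert (Hclosed : forall x, closed (valuation f x)) by (intros; simpl; auto).
    destruct (Hveq _ Hclosed (repeat a k)) as [Hacc Hrej].
    destruct Hv; subst; [apply Hacc, Hn|apply Hrej, Hn]. }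
  apply weak_verdict_summand in Hm. destruct Hm as [j [Hj Hinm]].
  rewrite repeat_length in Hj. rewrite summands_valuation in Hinm.
  apply in_map_iff in Hinm. destruct Hinm as [[j' l'] [E Hin']].
  inversion E; subst. exists j, l'; auto.
Qed.

End Transfer.

Definition only (y : nat) (v : verdict) (z : nat) : verdict :=
  if Nat.eqb z y then v else vend.

Lemma only_value m j l y v :
  In (j, l) (summands m) -> v <> vend ->
  subst (valuation (only y v)) l = Verd v -> l = Verd v \/ l = Var y.
Proof.
  intros Hin Hv E. unfold only in E.
  destruct (summand_leaf _ _ _ Hin) as [[w ->]|[z ->]]; simpl in E; inversion E; subst; auto.
  destruct (Nat.eqb_spec z y); subst; auto. congruence.
Qed.

Section Absorption.

Hypothesis single : forall b : A, b = a.
Variables m n : mon A.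
Hypothesis equiv : veq m n.

Lemma absorbs_verdict_summand k v :
  In (k, Verd v) (summands n) -> v = vyes \/ v = vno -> absorbs m (apow k (Verd v)).
Proof.
  intros Hin Hv.
  destruct (transfer_summand single m n (fun _ => vend) k _ v equiv Hin eq_refl Hv)
    as [j [l' [Hj [Hin' E]]]].
  assert (Hleaf : l' = Verd v).
  { destruct (summand_leaf _ _ _ Hin') as [[w ->]|[z ->]]; simpl in E; inversion E; auto.
    destruct Hv; congruence. }
  subst l'.
  eapply absorbs_trans; [apply (absorbs_own_summand single _ _ _ Hin')|].
  apply absorbs_deeper; auto. destruct Hv; subst; auto using saturated_yes, saturated_no.
Qed.

(* A variable summand a^k.y of n: m either has a summand a^j.y with j <= k, or
   both a yes- and a no-summand of depth <= k. *)
Lemma absorbs_variable_summand k y :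
  In (k, Var y) (summands n) -> absorbs m (apow k (Var y)).
Proof.
  intros Hin.
  assert (Hvar : forall j, j <= k -> In (j, Var y) (summands m) -> absorbs m (apow k (Var y))).
  { intros j Hj Hin'. eapply absorbs_trans; [apply (absorbs_own_summand single _ _ _ Hin')|].
    apply absorbs_deeper; auto using saturated_all. }
  assert (Hval : forall v, subst (valuation (only y v)) (Var y) = Verd v).
  { intros v. cbv [subst valuation only]. rewrite Nat.eqb_refl. reflexivity. }
  destruct (transfer_summand single m n (only y vyes) k _ vyes equiv Hin (Hval vyes)
              (or_introl eq_refl)) as [j1 [l1 [Hj1 [Hin1 E1]]]].
  destruct (only_value _ _ _ _ vyes Hin1 ltac:(discriminate) E1) as [->| ->]; [|eauto].
  destruct (transfer_summand single m n (only y vno) k _ vno equiv Hin (Hval vno)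
              (or_intror eq_refl)) as [j2 [l2 [Hj2 [Hin2 E2]]]].
  destruct (only_value _ _ _ _ vno Hin2 ltac:(discriminate) E2) as [->| ->]; [|eauto].
  apply (absorbs_yes_no m j1 j2 k); auto; apply (absorbs_own_summand single); auto.
Qed.

Lemma equiv_absorbs : absorbs m n.
Proof.
  apply (absorbs_by_summands single). intros k l Hin.
  destruct (summand_leaf _ _ _ Hin) as [[v ->]|[y ->]].
  - destruct v.
    + eapply absorbs_eq_r; [apply d_sym, apow_end|apply absorbs_end].
    + apply absorbs_verdict_summand; auto.
    + apply absorbs_verdict_summand; auto.
  - apply absorbs_variable_summand, Hin.
Qed.

End Absorption.

Lemma veq_sym (m n : mon A) : veq m n -> veq n m.
Proof.
  intros H sg Hc s. destruct (H sg Hc s) as [[? ?] [? ?]]. repeat split; auto.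
Qed.

End Completeness.

Theorem mainTheorem16 (A : Type) (a : A) (Hsingle : forall b : A, b = a)
  (m n : mon A) :
  veq m n -> derivable (Ev1' a) m n.
Proof.
  intros Hmn.
  apply absorbs_antisym.
  - exact (equiv_absorbs A a Hsingle m n Hmn).
  - exact (equiv_absorbs A a Hsingle n m (veq_sym A m n Hmn)).
Qed.
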